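(* Let $(\mathscr{A},\mathscr{E})$ and $(\mathscr{B},\mathscr{F})$ be exact categories and let $L : \mathscr{A} \rightarrow \mathscr{B}$ be an exact functor. Define $\mathscr{E}_L^0 = \{ s \in \mathscr{E} : Ls \text{ is a split exact sequence in } \mathscr{B} \}$. Then $(\mathscr{A},\mathscr{E}_L^0)$ is an exact category.
   Context: An exact category $(\mathscr{A},\mathscr{E})$ is an additive category $\mathscr{A}$ together with a class $\mathscr{E}$ of kernel–cokernel pairs $X \rightarrowtail Y \twoheadrightarrow Z$ (conflations), closed under isomorphism, satisfying Quillen's axioms. An exact functor is an additive functor sending conflations to conflations. A sequence is split exact if it is isomorphic to $X \to X\oplus Z \to Z$ with the canonical inclusion and projection. *)

From HB Require Import structures.
From mathcomp Require Import all_boot all_algebra.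
Set Implicit Arguments. Unset Strict Implicit. Unset Printing Implicit Defensive.
Import GRing.Theory.
Local Open Scope ring_scope.

Record PreAddCat := {
  Ob :> Type;
  Hom : Ob -> Ob -> zmodType;
  idm : forall A : Ob, Hom A A;
  comp : forall A B C : Ob, Hom B C -> Hom A B -> Hom A C;
  compA : forall A B C D (h : Hom C D) (g : Hom B C) (f : Hom A B),
      comp h (comp g f) = comp (comp h g) f;
  comp_id_l : forall A B (f : Hom A B), comp (idm B) f = f;
  comp_id_r : forall A B (f : Hom A B), comp f (idm A) = f;
  comp_addl : forall A B C (g1 g2 : Hom B C) (f : Hom A B),
      comp (g1 + g2) f = comp g1 f + comp g2 f;
  comp_addr : forall A B C (g : Hom B C) (f1 f2 : Hom A B),
      comp g (f1 + f2) = comp g f1 + comp g f2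
}.

Arguments idm {_} _.
Arguments comp {_ _ _ _} _ _.

Section Defs.
Variable C : PreAddCat.
Local Notation "g ∘ f" := (@comp C _ _ _ g f) (at level 40, left associativity).

Definition zero_object (Z : C) : Prop := idm Z = 0.

Definition is_iso (A B : C) (f : Hom A B) : Prop :=
  exists g : Hom B A, g ∘ f = idm A /\ f ∘ g = idm B.

Definition is_biproduct (X Z P : C) (i1 : Hom X P) (i2 : Hom Z P)
    (p1 : Hom P X) (p2 : Hom P Z) : Prop :=
  [/\ p1 ∘ i1 = idm X, p2 ∘ i2 = idm Z, p1 ∘ i2 = 0, p2 ∘ i1 = 0
    & i1 ∘ p1 + i2 ∘ p2 = idm P].

Definition additive : Prop :=
  (exists Z : C, zero_object Z) /\
  forall X Z : C, exists (P : C) (i1 : Hom X P) (i2 : Hom Z P)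
      (p1 : Hom P X) (p2 : Hom P Z), is_biproduct i1 i2 p1 p2.

Definition is_kernel (K A B : C) (k : Hom K A) (f : Hom A B) : Prop :=
  f ∘ k = 0 /\
  forall (T : C) (g : Hom T A), f ∘ g = 0 -> exists! h : Hom T K, k ∘ h = g.

Definition is_cokernel (A B Q : C) (f : Hom A B) (q : Hom B Q) : Prop :=
  q ∘ f = 0 /\
  forall (T : C) (g : Hom B T), g ∘ f = 0 -> exists! h : Hom Q T, h ∘ q = g.

Definition kernel_cokernel_pair (X Y Z : C) (i : Hom X Y) (d : Hom Y Z) : Prop :=
  is_kernel i d /\ is_cokernel i d.

Definition seq_class := forall X Y Z : C, Hom X Y -> Hom Y Z -> Prop.

Definition adm_mono (E : seq_class) (X Y : C) (i : Hom X Y) : Prop :=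
  exists (Z : C) (d : Hom Y Z), E X Y Z i d.
Definition adm_epi (E : seq_class) (Y Z : C) (d : Hom Y Z) : Prop :=
  exists (X : C) (i : Hom X Y), E X Y Z i d.

Definition is_pushout (A B A' B' : C) (i : Hom A B) (f : Hom A A')
    (i' : Hom A' B') (f' : Hom B B') : Prop :=
  f' ∘ i = i' ∘ f /\
  forall (T : C) (u : Hom B T) (v : Hom A' T), u ∘ i = v ∘ f ->
    exists! w : Hom B' T, w ∘ f' = u /\ w ∘ i' = v.

Definition is_pullback (B' A' B A : C) (d' : Hom B' A') (f' : Hom B' B)
    (d : Hom B A) (f : Hom A' A) : Prop :=
  d ∘ f' = f ∘ d' /\
  forall (T : C) (u : Hom T B) (v : Hom T A'), d ∘ u = f ∘ v ->
    exists! w : Hom T B', f' ∘ w = u /\ d' ∘ w = v.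

(* Exact category in the sense of Quillen, axioms as in Buehler,
   "Exact categories", Def. 2.1 *)
Definition is_exact_structure (E : seq_class) : Prop :=
  additive /\
  [/\
      (forall X Y Z (i : Hom X Y) (d : Hom Y Z), E X Y Z i d ->
          kernel_cokernel_pair i d),
      (forall X Y Z X' Y' Z' (i : Hom X Y) (d : Hom Y Z)
              (i' : Hom X' Y') (d' : Hom Y' Z')
              (a : Hom X X') (b : Hom Y Y') (c : Hom Z Z'),
          is_iso a -> is_iso b -> is_iso c ->
          b ∘ i = i' ∘ a -> c ∘ d = d' ∘ b ->
          E X Y Z i d -> E X' Y' Z' i' d'),
      ((forall A : C, adm_mono E (idm A)) /\ (forall A : C, adm_epi E (idm A))),
      ((forall A B D (f : Hom A B) (g : Hom B D),
          adm_mono E f -> adm_mono E g -> adm_mono E (g ∘ f)) /\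
      (forall A B D (f : Hom A B) (g : Hom B D),
          adm_epi E f -> adm_epi E g -> adm_epi E (g ∘ f)))
    &
      ((forall A B A' (i : Hom A B) (f : Hom A A'), adm_mono E i ->
          exists (B' : C) (i' : Hom A' B') (f' : Hom B B'),
            is_pushout i f i' f' /\ adm_mono E i') /\
      (forall B A A' (d : Hom B A) (f : Hom A' A), adm_epi E d ->
          exists (B' : C) (d' : Hom B' A') (f' : Hom B' B),
            is_pullback d' f' d f /\ adm_epi E d'))].

(* X --i--> Y --d--> Z is isomorphic to X --> X (+) Z --> Z
   (canonical inclusion / projection of a biproduct) *)
Definition split_exact (X Y Z : C) (i : Hom X Y) (d : Hom Y Z) : Prop :=
  exists (P : C) (i1 : Hom X P) (i2 : Hom Z P) (p1 : Hom P X) (p2 : Hom P Z)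
         (a : Hom X X) (b : Hom Y P) (c : Hom Z Z),
    is_biproduct i1 i2 p1 p2 /\ [/\ is_iso a, is_iso b, is_iso c,
        b ∘ i = i1 ∘ a & c ∘ d = p2 ∘ b].

End Defs.

Arguments seq_class : clear implicits.

Record AddFunctor (A B : PreAddCat) := {
  Fob :> A -> B;
  Fmap : forall X Y : A, Hom X Y -> Hom (Fob X) (Fob Y);
  Fmap_id : forall X : A, Fmap (idm X) = idm (Fob X);
  Fmap_comp : forall X Y Z (g : Hom Y Z) (f : Hom X Y),
      Fmap (comp g f) = comp (Fmap g) (Fmap f);
  Fmap_add : forall X Y (f g : Hom X Y), Fmap (f + g) = Fmap f + Fmap g
}.
Arguments Fmap {_ _} _ {_ _} _.

Definition exact_functor (A B : PreAddCat) (E : seq_class A) (F : seq_class B)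
    (L : AddFunctor A B) : Prop :=
  forall X Y Z (i : Hom X Y) (d : Hom Y Z),
    E X Y Z i d -> F (L X) (L Y) (L Z) (Fmap L i) (Fmap L d).

Definition E_L0 (A B : PreAddCat) (E : seq_class A) (L : AddFunctor A B)
    : seq_class A :=
  fun X Y Z i d => E X Y Z i d /\ split_exact (Fmap L i) (Fmap L d).

(* For a conflation s of E, exactness of L makes L s a kernel-cokernel pair, and such a pair is
   split exact as soon as its monomorphism is a split mono, or equivalently its epimorphism is a
   split epi. So E_L^0 consists of the conflations whose admissible mono (epi) L sends to a split
   mono (epi). Split monos and split epis are stable under identities, composition and
   isomorphism, and a pushout (pullback) of a conflation has a cokernel (kernel) isomorphic to the
   original one, so every axiom of E transfers to E_L^0. *)
From mathcomp Require Import all_boot all_algebra.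
Set Implicit Arguments. Unset Strict Implicit. Unset Printing Implicit Defensive.
Import GRing.Theory.
Local Open Scope ring_scope.

Local Notation "g ∘ f" := (comp g f) (at level 40, left associativity).

Section Preadditive.
Variable C : PreAddCat.
Implicit Types X Y Z T : C.

Lemma comp0m X Y Z (f : Hom X Y) : (0 : Hom Y Z) ∘ f = 0.
Proof. by apply: (@addrI _ (0 ∘ f)); rewrite -comp_addl !addr0. Qed.

Lemma compm0 X Y Z (g : Hom Y Z) : g ∘ (0 : Hom X Y) = 0.
Proof. by apply: (@addrI _ (g ∘ 0)); rewrite -comp_addr !addr0. Qed.

Lemma compBm X Y Z (g1 g2 : Hom Y Z) (f : Hom X Y) : (g1 - g2) ∘ f = g1 ∘ f - g2 ∘ f.
Proof. by apply: (@addIr _ (g2 ∘ f)); rewrite -comp_addl !subrK. Qed.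

Lemma compmB X Y Z (g : Hom Y Z) (f1 f2 : Hom X Y) : g ∘ (f1 - f2) = g ∘ f1 - g ∘ f2.
Proof. by apply: (@addIr _ (g ∘ f2)); rewrite -comp_addr !subrK. Qed.

Lemma kernel_mono K Y Z T (k : Hom K Y) (f : Hom Y Z) (h1 h2 : Hom T K) :
  is_kernel k f -> k ∘ h1 = k ∘ h2 -> h1 = h2.
Proof.
move=> [fk0 kerU] kh12.
have fkh0 : f ∘ (k ∘ h1) = 0 by rewrite compA fk0 comp0m.
have [h [_ hU]] := kerU _ _ fkh0.
by rewrite -(hU h1 erefl) -(hU h2 (esym kh12)).
Qed.

Lemma cokernel_epi X Y Q T (f : Hom X Y) (q : Hom Y Q) (h1 h2 : Hom Q T) :
  is_cokernel f q -> h1 ∘ q = h2 ∘ q -> h1 = h2.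
Proof.
move=> [qf0 cokU] hq12.
have hqf0 : (h1 ∘ q) ∘ f = 0 by rewrite -compA qf0 compm0.
have [h [_ hU]] := cokU _ _ hqf0.
by rewrite -(hU h1 erefl) -(hU h2 (esym hq12)).
Qed.

Definition split_mono X Y (f : Hom X Y) := exists r : Hom Y X, r ∘ f = idm X.
Definition split_epi X Y (f : Hom X Y) := exists s : Hom Y X, f ∘ s = idm Y.

Lemma split_mono_id X : split_mono (idm X).
Proof. by exists (idm X); rewrite comp_id_l. Qed.

Lemma split_epi_id X : split_epi (idm X).
Proof. by exists (idm X); rewrite comp_id_l. Qed.

Lemma iso_split_mono X Y (f : Hom X Y) : is_iso f -> split_mono f.
Proof. by move=> [g [gf _]]; exists g. Qed.

Lemma iso_split_epi X Y (f : Hom X Y) : is_iso f -> split_epi f.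
Proof. by move=> [g [_ fg]]; exists g. Qed.

Lemma split_monoM X Y Z (f : Hom X Y) (g : Hom Y Z) :
  split_mono f -> split_mono g -> split_mono (g ∘ f).
Proof.
move=> [r rf] [r' r'g]; exists (r ∘ r').
by rewrite -compA (compA r') r'g comp_id_l.
Qed.

Lemma split_epiM X Y Z (f : Hom X Y) (g : Hom Y Z) :
  split_epi f -> split_epi g -> split_epi (g ∘ f).
Proof.
move=> [s fs] [s' gs']; exists (s ∘ s').
by rewrite -compA (compA f) fs comp_id_l.
Qed.

Lemma split_epi_of_comp X Y Z (f : Hom X Y) (g : Hom Y Z) :
  split_epi (g ∘ f) -> split_epi g.
Proof. by move=> [s gfs]; exists (f ∘ s); rewrite compA. Qed.

Lemma split_mono_of_comp X Y Z (f : Hom X Y) (g : Hom Y Z) :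
  split_mono (g ∘ f) -> split_mono f.
Proof. by move=> [r rgf]; exists (r ∘ g); rewrite -compA. Qed.

Lemma split_exact_biproduct X Y Z (i : Hom X Y) (s : Hom Z Y) (r : Hom Y X) (d : Hom Y Z) :
  is_biproduct i s r d -> split_exact i d.
Proof.
move=> bip; exists Y, i, s, r, d, (idm X), (idm Y), (idm Z).
have iso_idm W : is_iso (idm W) by exists (idm W); rewrite comp_id_l.
by split=> //; split; rewrite ?comp_id_l ?comp_id_r.
Qed.

(* The complementary idempotent [1 - i r] factors through the cokernel [d], yielding the section. *)
Lemma split_exact_of_split_mono X Y Z (i : Hom X Y) (d : Hom Y Z) :
  is_cokernel i d -> split_mono i -> split_exact i d.
Proof.
move=> cok [r ri]; have [di0 cokU] := cok.
have ei0 : (idm Y - i ∘ r) ∘ i = 0 by rewrite compBm comp_id_l -compA ri comp_id_r subrr.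
have [s [sd _]] := cokU _ _ ei0.
apply: (@split_exact_biproduct _ _ _ i s r d); split=> //; last by rewrite sd addrC subrK.
- apply: (cokernel_epi cok).
  by rewrite -compA sd compmB comp_id_r compA di0 comp0m subr0 comp_id_l.
- apply: (cokernel_epi cok).
  by rewrite -compA sd compmB comp_id_r compA ri comp_id_l subrr comp0m.
Qed.

Lemma split_exact_of_split_epi X Y Z (i : Hom X Y) (d : Hom Y Z) :
  is_kernel i d -> split_epi d -> split_exact i d.
Proof.
move=> ker [s ds]; have [di0 kerU] := ker.
have de0 : d ∘ (idm Y - s ∘ d) = 0 by rewrite compmB comp_id_r compA ds comp_id_l subrr.
have [r [ir _]] := kerU _ _ de0.
apply: (@split_exact_biproduct _ _ _ i s r d); split=> //; last by rewrite ir subrK.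
- apply: (kernel_mono ker).
  by rewrite compA ir compBm comp_id_l -compA di0 compm0 subr0 comp_id_r.
- apply: (kernel_mono ker).
  by rewrite compA ir compBm comp_id_l -compA ds comp_id_r subrr compm0.
Qed.

Lemma split_mono_of_split_exact X Y Z (i : Hom X Y) (d : Hom Y Z) :
  split_exact i d -> split_mono i.
Proof.
move=> [P [i1 [i2 [p1 [p2 [a [b [c [[p1i1 _ _ _ _] [[a' [a'a _]] _ _ bi _]]]]]]]]]].
exists (a' ∘ p1 ∘ b).
by rewrite -compA bi -!compA (compA p1) p1i1 comp_id_l.
Qed.

Lemma split_epi_of_split_exact X Y Z (i : Hom X Y) (d : Hom Y Z) :
  split_exact i d -> split_epi d.
Proof.
move=> [P [i1 [i2 [p1 [p2 [a [b [c [[_ p2i2 _ _ _] [_ [b' [_ bb']] [c' [c'c _]] _ cd]]]]]]]]]].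
have db' : d ∘ b' = c' ∘ p2.
  by rewrite -[d]comp_id_l -c'c -(compA c') cd -compA -(compA p2) bb' comp_id_r.
by exists (b' ∘ i2 ∘ c); rewrite !compA db' -(compA c') p2i2 comp_id_r.
Qed.

Lemma pushout_cokernel_iso A B A' B' Z Z' (i : Hom A B) (f : Hom A A') (i' : Hom A' B')
    (f' : Hom B B') (d : Hom B Z) (d' : Hom B' Z') :
  is_pushout i f i' f' -> is_cokernel i d -> is_cokernel i' d' ->
  exists k : Hom Z Z', k ∘ d = d' ∘ f' /\ is_iso k.
Proof.
move=> [sq poU] cok cok'; have [di0 cokU] := cok; have [d'i'0 cok'U] := cok'.
have di0f : d ∘ i = 0 ∘ f by rewrite di0 comp0m.
have [e [[ef' ei'] _]] := poU _ _ _ di0f.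
have [h [hd' _]] := cok'U _ _ ei'.
have d'f'i0 : (d' ∘ f') ∘ i = 0 by rewrite -compA sq compA d'i'0 comp0m.
have [k [kd _]] := cokU _ _ d'f'i0.
exists k; split=> //; exists h; split.
- by apply: (cokernel_epi cok); rewrite -compA kd compA hd' ef' comp_id_l.
- apply: (cokernel_epi cok'); rewrite comp_id_l.
  have d'f'i0f : (d' ∘ f') ∘ i = 0 ∘ f by rewrite d'f'i0 comp0m.
  have [w [_ wU]] := poU _ _ _ d'f'i0f.
  rewrite -(wU (k ∘ h ∘ d')); last by rewrite -!compA ?d'i'0 ?compm0 (compA h) hd' ef' kd.
  exact: wU.
Qed.

Lemma pullback_kernel_iso B' A' B A X X' (d' : Hom B' A') (f' : Hom B' B) (d : Hom B A)
    (f : Hom A' A) (i : Hom X B) (i' : Hom X' B') :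
  is_pullback d' f' d f -> is_kernel i d -> is_kernel i' d' ->
  exists k : Hom X' X, i ∘ k = f' ∘ i' /\ is_iso k.
Proof.
move=> [sq pbU] ker ker'; have [di0 kerU] := ker; have [d'i'0 ker'U] := ker'.
have di0f : d ∘ i = f ∘ 0 by rewrite di0 compm0.
have [e [[f'e d'e] _]] := pbU _ _ _ di0f.
have [h [i'h _]] := ker'U _ _ d'e.
have df'i'0 : d ∘ (f' ∘ i') = 0 by rewrite compA sq -compA d'i'0 compm0.
have [k [ik _]] := kerU _ _ df'i'0.
exists k; split=> //; exists h; split; last first.
  by apply: (kernel_mono ker); rewrite compA ik -compA i'h f'e comp_id_r.
apply: (kernel_mono ker'); rewrite comp_id_r.
have df'i'0f : d ∘ (f' ∘ i') = f ∘ 0 by rewrite df'i'0 compm0.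
have [w [_ wU]] := pbU _ _ _ df'i'0f.
rewrite -(wU (i' ∘ (h ∘ k))); last by rewrite !compA ?d'i'0 ?comp0m -(compA f') i'h f'e ik.
exact: wU.
Qed.

End Preadditive.

Lemma Fmap_iso (A B : PreAddCat) (L : AddFunctor A B) (X Y : A) (f : Hom X Y) :
  is_iso f -> is_iso (Fmap L f).
Proof. by move=> [g [gf fg]]; exists (Fmap L g); rewrite -!Fmap_comp gf fg !Fmap_id. Qed.

Section SplitConflations.
Variables (A B : PreAddCat) (E : seq_class A) (F : seq_class B) (L : AddFunctor A B).
Hypothesis E_exact : is_exact_structure E.
Hypothesis F_exact : is_exact_structure F.
Hypothesis L_exact : exact_functor E F L.
Implicit Types X Y Z : A.

Lemma conflation_kcp X Y Z (i : Hom X Y) (d : Hom Y Z) :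
  E i d -> kernel_cokernel_pair i d.
Proof. by have [_ [kcp _ _ _ _]] := E_exact; apply: kcp. Qed.

Lemma Fmap_conflation_kcp X Y Z (i : Hom X Y) (d : Hom Y Z) :
  E i d -> kernel_cokernel_pair (Fmap L i) (Fmap L d).
Proof. by have [_ [kcp _ _ _ _]] := F_exact; move/L_exact/kcp. Qed.

Lemma E_L0_of_split_mono X Y Z (i : Hom X Y) (d : Hom Y Z) :
  E i d -> split_mono (Fmap L i) -> E_L0 E L i d.
Proof.
move=> Es Li; split=> //.
by apply: split_exact_of_split_mono Li; have [_] := Fmap_conflation_kcp Es.
Qed.

Lemma E_L0_of_split_epi X Y Z (i : Hom X Y) (d : Hom Y Z) :
  E i d -> split_epi (Fmap L d) -> E_L0 E L i d.
Proof.
move=> Es Ld; split=> //.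
by apply: split_exact_of_split_epi Ld; have [] := Fmap_conflation_kcp Es.
Qed.

Lemma adm_mono_E_L0 X Y (i : Hom X Y) :
  adm_mono (E_L0 E L) i <-> adm_mono E i /\ split_mono (Fmap L i).
Proof.
split=> [[Z [d [Es /split_mono_of_split_exact Li]]] | [[Z [d Es]] Li]].
  by split=> //; exists Z, d.
by exists Z, d; apply: E_L0_of_split_mono.
Qed.

Lemma adm_epi_E_L0 Y Z (d : Hom Y Z) :
  adm_epi (E_L0 E L) d <-> adm_epi E d /\ split_epi (Fmap L d).
Proof.
split=> [[X [i [Es /split_epi_of_split_exact Ld]]] | [[X [i Es]] Ld]].
  by split=> //; exists X, i.
by exists X, i; apply: E_L0_of_split_epi.
Qed.

Lemma E_L0_iso_closed X Y Z X' Y' Z' (i : Hom X Y) (d : Hom Y Z)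
    (i' : Hom X' Y') (d' : Hom Y' Z') (a : Hom X X') (b : Hom Y Y') (c : Hom Z Z') :
  is_iso a -> is_iso b -> is_iso c -> b ∘ i = i' ∘ a -> c ∘ d = d' ∘ b ->
  E_L0 E L i d -> E_L0 E L i' d'.
Proof.
move=> a_iso b_iso c_iso bi cd [Es /split_mono_of_split_exact Li].
have [_ [_ iso_closed _ _ _]] := E_exact.
apply: E_L0_of_split_mono; first exact: iso_closed bi cd Es.
have [a' [_ aa']] := a_iso.
have -> : i' = b ∘ i ∘ a' by rewrite bi -compA aa' comp_id_r.
have La' : split_mono (Fmap L a') by exists (Fmap L a); rewrite -Fmap_comp aa' Fmap_id.
by rewrite !Fmap_comp; apply: split_monoM La' (split_monoM Li (iso_split_mono (Fmap_iso L b_iso))).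
Qed.

Lemma E_L0_pushout A0 B0 A0' (i : Hom A0 B0) (f : Hom A0 A0') :
  adm_mono (E_L0 E L) i ->
  exists (B0' : A) (i' : Hom A0' B0') (f' : Hom B0 B0'),
    is_pushout i f i' f' /\ adm_mono (E_L0 E L) i'.
Proof.
move=> [Z [d [Es /split_epi_of_split_exact Ld]]].
have [_ [_ _ _ _ [pushout _]]] := E_exact.
have [B0' [i' [f' [po [Z' [d' Es']]]]]] := pushout _ _ _ i f (ex_intro _ Z (ex_intro _ d Es)).
have [k [kd k_iso]] := pushout_cokernel_iso po (conflation_kcp Es).2 (conflation_kcp Es').2.
exists B0', i', f'; split=> //; exists Z', d'; apply: (E_L0_of_split_epi Es').
apply: (@split_epi_of_comp _ _ _ _ (Fmap L f')).
by rewrite -Fmap_comp -kd Fmap_comp; apply: split_epiM Ld (iso_split_epi (Fmap_iso L k_iso)).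
Qed.

Lemma E_L0_pullback B0 A0 A0' (d : Hom B0 A0) (f : Hom A0' A0) :
  adm_epi (E_L0 E L) d ->
  exists (B0' : A) (d' : Hom B0' A0') (f' : Hom B0' B0),
    is_pullback d' f' d f /\ adm_epi (E_L0 E L) d'.
Proof.
move=> [X [i [Es /split_mono_of_split_exact Li]]].
have [_ [_ _ _ _ [_ pullback]]] := E_exact.
have [B0' [d' [f' [pb [X' [i' Es']]]]]] := pullback _ _ _ d f (ex_intro _ X (ex_intro _ i Es)).
have [k [ik k_iso]] := pullback_kernel_iso pb (conflation_kcp Es).1 (conflation_kcp Es').1.
exists B0', d', f'; split=> //; exists X', i'; apply: (E_L0_of_split_mono Es').
apply: (@split_mono_of_comp _ _ _ _ _ (Fmap L f')).
by rewrite -Fmap_comp -ik Fmap_comp; apply: split_monoM (iso_split_mono (Fmap_iso L k_iso)) Li.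
Qed.

End SplitConflations.

Theorem mainTheorem2 (A B : PreAddCat) (E : seq_class A) (F : seq_class B)
    (L : AddFunctor A B) :
  is_exact_structure E -> is_exact_structure F -> exact_functor E F L ->
  is_exact_structure (E_L0 E L).
Proof.
move=> E_exact F_exact L_exact.
have [add [_ _ [E0m E0e] [E1m E1e] _]] := E_exact.
have adm_monoP := adm_mono_E_L0 F_exact L_exact.
have adm_epiP := adm_epi_E_L0 F_exact L_exact.
split=> //; split.
- by move=> X Y Z i d [/(conflation_kcp E_exact)].
- exact: (E_L0_iso_closed E_exact F_exact L_exact).
- split=> X.
  + by apply/adm_monoP; rewrite Fmap_id; split=> //; apply: split_mono_id.
  + by apply/adm_epiP; rewrite Fmap_id; split=> //; apply: split_epi_id.
- split=> X Y W f g.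
  + move=> /adm_monoP [Ef Lf] /adm_monoP [Eg Lg].
    by apply/adm_monoP; rewrite Fmap_comp; split; [apply: E1m | apply: split_monoM].
  + move=> /adm_epiP [Ef Lf] /adm_epiP [Eg Lg].
    by apply/adm_epiP; rewrite Fmap_comp; split; [apply: E1e | apply: split_epiM].
- split.
  + exact: (E_L0_pushout E_exact F_exact L_exact).
  + exact: (E_L0_pullback E_exact F_exact L_exact).
Qed.
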